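(* Let $(\Omega,\Sigma,\mu)$ be a finite measure space and let $X(\mu)$ be a Banach rectangular function space. The following are equivalent: (i) $X(\mu)$ has the subsequence property; (ii) the inclusion $X(\mu)\subseteq L^0(\mu)$ is continuous, where $L^0(\mu)$ carries the topology of convergence in measure; (iii) the positive cone $X(\mu)^+=\{f\in X(\mu):f\ge 0\ \mu\text{-a.e.}\}$ is closed in $X(\mu)$.
   Context: $L^0(\mu)$ is the space of equivalence classes (modulo $\mu$-a.e. equality) of real $\Sigma$-measurable functions on $\Omega$. A Banach rectangular function space is a vector subspace $X(\mu)\subseteq L^0(\mu)$ with a complete norm such that for some $C>0$, $\chi_Af\in X(\mu)$ and $\|\chi_Af\|\le C\|f\|$ for all $f\in X(\mu)$, $A\in\Sigma$. The subsequence property: whenever $f_n,f\in X(\mu)$ and $f_n\to f$ in norm, some subsequence converges to $f$ $\mu$-a.e. *)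

From HB Require Import structures.
From mathcomp Require Import all_boot all_order all_algebra.
From mathcomp Require Import all_classical all_reals all_analysis.
Set Implicit Arguments. Unset Strict Implicit. Unset Printing Implicit Defensive.
Import Order.TTheory GRing.Theory Num.Theory numFieldNormedType.Exports.
Local Open Scope classical_set_scope.
Local Open Scope ring_scope.
Definition lt_ereal (R : realType) (a b : \bar R) : Prop := (a < b)%E.

(* Elements of L^0(mu) are represented by measurable representatives
   T -> R; a function space X(mu) is a set X of such representatives which
   is saturated under mu-a.e. equality, and the norm is given by a functional
   N on representatives that is invariant under a.e. equality.  The quotient
   of X by a.e. equality with the norm induced by N is exactly the Banach
   space X(mu) of the paper. *)

Section Defs.
Context (d : measure_display) (T : measurableType d) (R : realType)
  (mu : {measure set T -> \bar R}).

Record banach_rect_fun_space (X : set (T -> R)) (N : (T -> R) -> R) : Prop := {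
  brfs_meas : forall f, X f -> measurable_fun setT f;
  brfs_ae_sat : forall f g, X f -> measurable_fun setT g ->
    {ae mu, forall x, f x = g x} -> X g;
  brfs_zero : X (fun _ => 0);
  brfs_add : forall f g, X f -> X g -> X (fun x => f x + g x);
  brfs_scale : forall (a : R) f, X f -> X (fun x => a * f x);
  brfs_norm_ae : forall f g, X f -> X g ->
    {ae mu, forall x, f x = g x} -> N f = N g;
  brfs_norm_def : forall f, X f -> (N f = 0 <-> {ae mu, forall x, f x = 0});
  brfs_norm_triangle : forall f g, X f -> X g ->
    N (fun x => f x + g x) <= N f + N g;
  brfs_norm_homog : forall (a : R) f, X f -> N (fun x => a * f x) = `|a| * N f;
  brfs_complete : forall u : nat -> T -> R, (forall n, X (u n)) ->
    (forall e : R, 0 < e -> exists M : nat, forall m n : nat, (M <= m)%N -> (M <= n)%N ->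
        N (fun x => u n x - u m x) < e) ->
    exists2 f, X f & (N (fun x => u n x - f x)) @[n --> \oo] --> 0;
  brfs_rect : exists2 C : R, 0 < C & forall f A, X f -> measurable A ->
    X (fun x => \1_A x * f x) /\ N (fun x => \1_A x * f x) <= C * N f
}.

Definition subsequence_property (X : set (T -> R)) (N : (T -> R) -> R) : Prop :=
  forall (u : nat -> T -> R) (f : T -> R), (forall n, X (u n)) -> X f ->
    (N (fun x => u n x - f x)) @[n --> \oo] --> 0 ->
    exists phi : nat -> nat, (forall n, (phi n < phi n.+1)%N) /\
      {ae mu, forall x, ((fun n => u (phi n) x) : nat -> R) @ \oo --> f x}.

(* (ii) continuity of the inclusion X(mu) -> L^0(mu), L^0(mu) carrying the
   topology of convergence in measure, whose basic neighbourhoods of f are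
   {g : mu [set x | eps < |g x - f x|] < delta}, eps, delta > 0. *)
Definition inclusion_L0_continuous (X : set (T -> R)) (N : (T -> R) -> R) : Prop :=
  forall f, X f -> forall eps delta : R, 0 < eps -> 0 < delta ->
    exists2 eta : R, 0 < eta & forall g, X g -> N (fun x => g x - f x) < eta ->
      lt_ereal (mu [set x | eps < `|g x - f x|]) delta%:E.

Definition pos_cone (X : set (T -> R)) : set (T -> R) :=
  [set f | X f /\ {ae mu, forall x, 0 <= f x}].

Definition pos_cone_closed (X : set (T -> R)) (N : (T -> R) -> R) : Prop :=
  forall g, X g ->
    (forall eta : R, 0 < eta -> exists2 f, pos_cone X f & N (fun x => f x - g x) < eta) ->
    pos_cone X g.

End Defs.

From Pilot Require Import Defs.
From HB Require Import structures.
From mathcomp Require Import all_boot all_order all_algebra.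
From mathcomp Require Import all_classical all_reals all_analysis.
From mathcomp Require Import lra measurable_realfun.
Import Order.TTheory GRing.Theory Num.Theory numFieldNormedType.Exports.
Local Open Scope classical_set_scope.
Local Open Scope ring_scope.
Set Implicit Arguments. Unset Strict Implicit.

(* (i) => (ii): if the inclusion were not continuous at f, there would be g_n
   with ||g_n - f|| < 1/(n+1) and mu [eps < |g_n - f|] >= delta for all n;
   as mu is finite, the lim sup of these sets still has measure >= delta, while
   it is null if a subsequence of g_n converges a.e. to f.
   (ii) => (iii): if f_n >= 0 a.e. and f_n -> g in norm, then f_n -> g in
   measure, and {g < -eps} is covered by {eps < |f_n - g|} up to a null set.
   (iii) => (i): rectangularity gives |f| = 1_{f > 0} f - 1_{f <= 0} f in X
   with ||f|| controlling || |f| ||. Choose phi with ||u_(phi k) - f|| < 2^-k;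
   then h_k = |u_(phi k) - f| has summable norms, so its partial sums S_m
   converge in norm to some s in X. Closedness of the cone turns
   s - S_m = lim_n (S_n - S_m) >= 0 into S_m <= s a.e., so sum_k h_k(x)
   converges a.e. and h_k(x) -> 0. *)

Section real_sequences.
Context (R : realType).

Lemma cvg0_subsequence_lt (a e : R^nat) : a @ \oo --> 0 -> (forall k, 0 < e k) ->
  exists phi : nat -> nat,
    (forall k, (phi k < phi k.+1)%N) /\ forall k, a (phi k) < e k.
Proof.
move=> a0 e0.
have late (km : nat * nat) : exists n, (km.2 <= n)%N /\ a n < e km.1.
  case: km => k m /=; move/cvgrPdist_lt: a0 => /(_ _ (e0 k)) [M _ aM].
  exists (maxn m M).
  split=> /=; first exact: leq_maxl.
  by apply: le_lt_trans (aM _ (leq_maxr m M)); rewrite sub0r normrN ler_norm.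
have [pick pickP] := choice late.
pose fix phi k := if k is k'.+1 then pick (k, (phi k').+1) else pick (0, 0)%N.
exists phi; split => [k | [|k]] /=.
- by case: (pickP (k.+1, (phi k).+1)).
- by case: (pickP (0, 0)%N).
- by case: (pickP (k.+1, (phi k).+1)).
Qed.

Lemma bounded_nneg_series_cvg0 (h : R^nat) (s : R) :
  (forall k, 0 <= h k) -> (forall m, series h m <= s) -> h @ \oo --> 0.
Proof.
move=> h0 hs; apply: cvg_series_cvg_0; apply: nondecreasing_is_cvgn.
  by rewrite seriesEnat; apply: nondecreasing_series => k _ _; exact: h0.
by exists s => _ [m _ <-]; exact: hs.
Qed.

End real_sequences.

Section measure_lemmas.
Context (d : measure_display) (T : measurableType d) (R : realType).
Implicit Types (f g : T -> R) (mu : {measure set T -> \bar R}).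

Lemma measurable_ltr f g : measurable_fun setT f -> measurable_fun setT g ->
  measurable [set x | f x < g x].
Proof.
move=> mf mg; rewrite -[X in measurable X]setTI.
exact: measurable_fun_ltr mf mg measurableT [set true] I.
Qed.

Lemma measurable_lt_dist f g (eps : R) :
  measurable_fun setT f -> measurable_fun setT g ->
  measurable [set x | eps < `|f x - g x|].
Proof.
move=> mf mg; apply: measurable_ltr; first exact: measurable_cst.
exact: measurableT_comp (@normr_measurable R setT) (measurable_funB mf mg).
Qed.

Lemma le_measure_ae mu (A B : set T) : measurable A -> measurable B ->
  {ae mu, forall x, A x -> B x} -> (mu A <= mu B)%E.
Proof.
move=> mA mB [Z [mZ muZ0 AB]].
have AZB : A `<=` Z `|` B.
  by move=> x Ax; have [Bx|nBx] := pselect (B x); [right|left; apply: AB => /(_ Ax)].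
have := le_measure mu (mem_set mA) (mem_set (measurableU _ _ mZ mB)) AZB.
move/le_trans; apply; rewrite -[leRHS]add0e -muZ0; exact: measureU2.
Qed.

Lemma negligible_lt_ae_ge0 mu g :
  (forall e : R, 0 < e -> mu.-negligible [set x | g x < - e]) ->
  {ae mu, forall x, 0 <= g x}.
Proof.
move=> gN; have posn n : 0 < (n.+1%:R : R)^-1 by rewrite invr_gt0 ltr0n.
apply: negligibleS (negligible_bigcup (fun n => gN _ (posn n))).
move=> x /= /negP; rewrite -ltNge -oppr_gt0 => gx0.
have [M _ /(_ M (leqnn M)) /= ltM] := near_infty_natSinv_lt (PosNum gx0).
by exists M => //=; rewrite ltrNr.
Qed.

Lemma lim_sup_set_ge (mu : {finite_measure set T -> \bar R}) (F : (set T)^nat)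
    (a : \bar R) :
  (forall k, measurable (F k)) -> (forall k, a <= mu (F k))%E ->
  (a <= mu (lim_sup_set F))%E.
Proof.
move=> mF aF; have mUF n : measurable (\bigcup_(k >= n) F k).
  by apply: bigcup_measurable => k _; exact: mF.
apply: (cvge_to_ge (lim_sup_set_cvg mu F mF _)).
  by rewrite ltey_eq fin_num_measure.
apply: nearW => n; apply: le_trans (aF n) _.
by apply: le_measure; rewrite ?inE // => x Fx; exists n => /=.
Qed.

Lemma ae_cvg_lim_sup_set_negligible mu (u : (T -> R)^nat) f (eps : R) : 0 < eps ->
  {ae mu, forall x, u n x @[n --> \oo] --> f x} ->
  mu.-negligible (lim_sup_set (fun n => [set x | eps < `|u n x - f x|])).
Proof.
move=> eps0; apply: negligibleS => x limx /= /cvgrPdist_lt /(_ _ eps0) [M _ uM].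
have [j /= Mj] := limx M I.
by rewrite ltNge distrC (ltW (uM j Mj)).
Qed.

End measure_lemmas.

Section banach_rect_fun_space.
Context (d : measure_display) (T : measurableType d) (R : realType)
  (mu : {measure set T -> \bar R}) (X : set (T -> R)) (N : (T -> R) -> R).
Hypothesis B : banach_rect_fun_space mu X N.

Lemma brfs_opp f : X f -> X (fun x => - f x).
Proof.
by move=> Xf; have := brfs_scale B (-1) Xf; congr X; apply: funext => x; rewrite mulN1r.
Qed.

Lemma brfs_sub f g : X f -> X g -> X (fun x => f x - g x).
Proof. by move=> Xf Xg; have := brfs_add B Xf (brfs_opp Xg). Qed.

Lemma brfs_norm0 : N (fun=> 0) = 0.
Proof. by apply/(brfs_norm_def B (brfs_zero B)); exact: aeW. Qed.

Lemma brfs_norm_opp f : X f -> N (fun x => - f x) = N f.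
Proof.
move=> Xf; have := brfs_norm_homog B (-1) Xf; rewrite normrN normr1 mul1r => <-.
by congr N; apply: funext => x; rewrite mulN1r.
Qed.

Lemma brfs_norm_ge0 f : X f -> 0 <= N f.
Proof.
move=> Xf; have := brfs_norm_triangle B Xf (brfs_opp Xf).
rewrite brfs_norm_opp //.
have -> : (fun x => f x - f x) = (fun=> 0 : R) by apply: funext => x; rewrite subrr.
by rewrite brfs_norm0 -mulr2n -mulr_natr pmulr_lge0.
Qed.

Lemma brfs_abs : exists2 K : R, 0 < K & forall f, X f ->
  X (fun x => `|f x|) /\ N (fun x => `|f x|) <= K * N f.
Proof.
have [C C0 rectC] := brfs_rect B; exists (C + C) => [|f Xf]; first exact: addr_gt0.
pose A := [set x | 0 < f x].
have mA : measurable A by apply: measurable_ltr (measurable_cst _) (brfs_meas B Xf).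
have [XAf NAf] := rectC f A Xf mA.
have [XAcf NAcf] := rectC f _ Xf (measurableC mA).
have -> : (fun x => `|f x|) = (fun x => \1_A x * f x - \1_(~` A) x * f x).
  apply: funext => x; rewrite !indicE in_setC; have [fx0|fx0] := ltP 0 (f x).
    by rewrite (mem_set (fx0 : A x)) mul1r mul0r subr0 gtr0_norm.
  rewrite (memNset (_ : ~ A x)) ?mul1r ?mul0r ?sub0r ?ler0_norm //.
  by apply/negP; rewrite -leNgt.
split; first exact: brfs_sub.
apply: le_trans (brfs_norm_triangle B XAf (brfs_opp XAcf)) _.
by rewrite brfs_norm_opp // mulrDl lerD.
Qed.

Lemma brfs_sum (h : nat -> T -> R) m n : (forall k, X (h k)) ->
  X (fun x => \sum_(m <= k < n) h k x) /\
  N (fun x => \sum_(m <= k < n) h k x) <= \sum_(m <= k < n) N (h k).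
Proof.
move=> Xh; have sum_nil p : (p <= m)%N ->
    X (fun x => \sum_(m <= k < p) h k x) /\
    N (fun x => \sum_(m <= k < p) h k x) <= \sum_(m <= k < p) N (h k).
  move=> pm; have -> : (fun x => \sum_(m <= k < p) h k x) = (fun=> 0).
    by apply: funext => x; rewrite big_geq.
  by rewrite big_geq // brfs_norm0; split; [exact: brfs_zero B|].
elim: n => [|n [XS NS]]; first exact: sum_nil.
have [mn|nm] := leqP m n; last exact: sum_nil.
have -> : (fun x => \sum_(m <= k < n.+1) h k x) =
    (fun x => \sum_(m <= k < n) h k x + h n x).
  by apply: funext => x; rewrite big_nat_recr.
rewrite big_nat_recr //=; split; first exact: (brfs_add B XS (Xh n)).
by apply: le_trans (brfs_norm_triangle B XS (Xh n)) _; rewrite lerD2r.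
Qed.

Lemma brfs_series_cvg (h : nat -> T -> R) (b : R^nat) :
  (forall k, X (h k)) -> (forall k, N (h k) <= b k) -> cvgn (series b) ->
  exists2 s, X s & N (fun x => \sum_(0 <= k < n) h k x - s x) @[n --> \oo] --> 0.
Proof.
move=> Xh hb /cvg_ex [l /cvgrPdist_lt bl].
pose S n x := \sum_(0 <= k < n) h k x.
have XS n : X (S n) by case: (brfs_sum 0 n Xh).
have dist_le m n : (m <= n)%N ->
    N (fun x => S n x - S m x) <= series b n - series b m.
  move=> mn; have -> : (fun x => S n x - S m x) = (fun x => \sum_(m <= k < n) h k x).
    by apply: funext => x; rewrite /S (big_cat_nat (leq0n m) mn) /= addrAC subrr add0r.
  rewrite sub_series_geq //; apply: le_trans (brfs_sum m n Xh).2 _.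
  by apply: ler_sum => k _; exact: hb.
apply: (brfs_complete B XS) => e e0.
have [M _ bM] := bl _ (divr_gt0 e0 (ltr0n _ 2)); exists M => m n Mm Mn.
wlog mn : m n Mm Mn / (m <= n)%N.
  move=> gen; have [|/ltnW nm] := leqP m n; first exact: gen.
  rewrite -brfs_norm_opp; last exact: brfs_sub.
  under eq_fun do rewrite opprB; exact: gen.
apply: le_lt_trans (dist_le m n mn) _.
move: (bM m Mm) (bM n Mn) => /ltr_distlDr lm /ltr_distlCDr nl; lra.
Qed.

Lemma pos_cone_closed_cvg (g : nat -> T -> R) f : pos_cone_closed mu X N ->
  (forall n, pos_cone mu X (g n)) -> X f ->
  N (fun x => g n x - f x) @[n --> \oo] --> 0 -> pos_cone mu X f.
Proof.
move=> closed g_pos Xf /cvgrPdist_lt gf; apply: closed => // eta eta0.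
have [M _ gM] := gf _ eta0; exists (g M) => //.
have XgM := proj1 (g_pos M).
have := gM M (leqnn M); rewrite sub0r normrN ger0_norm //.
by apply: brfs_norm_ge0; exact: brfs_sub.
Qed.

Lemma inclusion_L0_continuous_pos_cone_closed :
  inclusion_L0_continuous mu X N -> pos_cone_closed mu X N.
Proof.
move=> cont g Xg near_g; split => //; apply: negligible_lt_ae_ge0 => e e0.
have mg := brfs_meas B Xg.
apply/negligibleP; first exact: measurable_ltr mg (measurable_cst _).
apply/eqP; rewrite -measure_le0; apply/lee_addgt0Pr => delta delta0; rewrite add0e.
have [eta eta0 etaP] := cont g Xg e delta e0 delta0.
have [f [Xf f_ge0] fg] := near_g eta eta0.
apply: le_trans (ltW (etaP f Xf fg)); apply: le_measure_ae.
- exact: measurable_ltr mg (measurable_cst _).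
- exact: measurable_lt_dist (brfs_meas B Xf) mg.
- by apply: filterS f_ge0 => x fx0 /= gx; rewrite ger0_norm; lra.
Qed.

Lemma pos_cone_closed_partial_sum_le (h : nat -> T -> R) s :
  pos_cone_closed mu X N -> (forall k, X (h k)) -> (forall k x, 0 <= h k x) ->
  X s -> N (fun x => \sum_(0 <= k < n) h k x - s x) @[n --> \oo] --> 0 ->
  forall m, {ae mu, forall x, \sum_(0 <= k < m) h k x <= s x}.
Proof.
move=> closed Xh h_ge0 Xs hs m; have XSm := (brfs_sum 0 m Xh).1.
suff [_] : pos_cone mu X (fun x => s x - \sum_(0 <= k < m) h k x).
  by apply: filterS => x; rewrite subr_ge0.
apply: (pos_cone_closed_cvg (g := fun n x => \sum_(m <= k < n + m) h k x))
  closed _ (brfs_sub Xs XSm) _.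
- move=> n; split; first exact: (brfs_sum m (n + m) Xh).1.
  by apply: aeW => x; apply: sumr_ge0 => k _; exact: h_ge0.
- move: hs; rewrite -(cvg_shiftn m); apply: cvg_trans; apply: near_eq_cvg.
  apply: nearW => n /=; congr N; apply: funext => x.
  by rewrite (big_cat_nat (leq0n m) (leq_addl n m)) /=; lra.
Qed.

Lemma pos_cone_closed_subsequence :
  pos_cone_closed mu X N -> subsequence_property mu X N.
Proof.
move=> closed u f Xu Xf uf.
have [K K0 absK] := brfs_abs.
have half_pow_gt0 k : 0 < (2^-1 : R) ^+ k by rewrite exprn_gt0 // invr_gt0.
have [phi [phi_incr phi_fast]] := cvg0_subsequence_lt uf half_pow_gt0.
exists phi; split => //.
pose h k x := `|u (phi k) x - f x|.
have Xh k : X (h k) by have [] := absK _ (brfs_sub (Xu (phi k)) Xf).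
have Nh k : N (h k) <= geometric K 2^-1 k.
  have [_ /le_trans] := absK _ (brfs_sub (Xu (phi k)) Xf); apply.
  by rewrite /geometric /= ler_pM2l // ltW.
have half_lt1 : `|2^-1 : R| < 1 by rewrite ger0_norm ?invr_ge0 ?invf_lt1 ?ltr1n.
have [s Xs hs] := brfs_series_cvg Xh Nh (@is_cvg_geometric_series _ K _ half_lt1).
have := pos_cone_closed_partial_sum_le closed Xh (fun k x => normr_ge0 _) Xs hs.
move=> /ae_foralln; apply: filterS => x Sx.
have h0 := bounded_nneg_series_cvg0 (h := h^~ x) (fun k => normr_ge0 _) Sx.
apply/cvgrPdist_lt => eps eps0; move/cvgrPdist_lt: h0 => /(_ _ eps0).
by apply: filterS => k; rewrite sub0r normrN normr_id distrC.
Qed.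

End banach_rect_fun_space.

Section finite_measure.
Context (d : measure_display) (T : measurableType d) (R : realType)
  (mu : {finite_measure set T -> \bar R}) (X : set (T -> R)) (N : (T -> R) -> R).
Hypothesis B : banach_rect_fun_space mu X N.

Lemma subsequence_property_inclusion_L0_continuous :
  subsequence_property mu X N -> inclusion_L0_continuous mu X N.
Proof.
move=> subseq f Xf eps delta eps0 delta0; apply: contrapT => discont.
have far n : exists g, [/\ X g, N (fun x => g x - f x) < n.+1%:R^-1 &
    (delta%:E <= mu [set x | (eps < `|g x - f x|)%R])%E].
  apply: contrapT => nfar; apply: discont; exists n.+1%:R^-1; first by rewrite invr_gt0.
  move=> g Xg gf; rewrite /Defs.lt_ereal ltNge; apply/negP => far_g; apply: nfar.
  by exists g.
have [g gP] := choice far.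
have Xg n : X (g n) by case: (gP n).
have gf : N (fun x => g n x - f x) @[n --> \oo] --> 0.
  apply/cvgrPdist_lt => r r0; have := near_infty_natSinv_lt (PosNum r0).
  apply: filterS => n /= ltn; have [_ gfn _] := gP n.
  rewrite sub0r normrN ger0_norm; first exact: lt_trans gfn ltn.
  by apply: (brfs_norm_ge0 B); exact: (brfs_sub B).
have [phi [_ ae_cvg]] := subseq g f Xg Xf gf.
pose A n := [set x | eps < `|g (phi n) x - f x|].
have mA n : measurable (A n).
  exact: measurable_lt_dist (brfs_meas B (Xg _)) (brfs_meas B Xf).
have : (delta%:E <= mu (lim_sup_set A))%E.
  by apply: lim_sup_set_ge => // n; case: (gP (phi n)).
rewrite (measure_negligible _ (ae_cvg_lim_sup_set_negligible eps0 ae_cvg)).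
  by rewrite lee_fin leNgt delta0.
by apply: bigcapT_measurable => n; apply: bigcup_measurable => k _; exact: mA.
Qed.

End finite_measure.

Theorem lemma2p8 (d : measure_display) (T : measurableType d) (R : realType)
  (mu : {finite_measure set T -> \bar R})
  (X : set (T -> R)) (N : (T -> R) -> R) :
  banach_rect_fun_space mu X N ->
  (subsequence_property mu X N <-> inclusion_L0_continuous mu X N) /\
  (inclusion_L0_continuous mu X N <-> pos_cone_closed mu X N).
Proof.
move=> B.
have i_ii := subsequence_property_inclusion_L0_continuous B.
have ii_iii := inclusion_L0_continuous_pos_cone_closed B.
have iii_i := pos_cone_closed_subsequence B.
split; split.
- exact: i_ii.
- by move=> /ii_iii/iii_i.
- exact: ii_iii.
- by move=> /iii_i/i_ii.
Qed.
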